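(* In the setting described in the context, let $K=\max_{i\in\{1,2\}}\|w^{(i)}_0\|$ and let $T=\sum_{t=1}^N \tau_t$ be the number of updates performed by the Update-by-Disagreement perceptron over $N$ iterations. Then $$\mathbb{E}[T]\;\le\;\frac{3\,(4K+1)}{(1-2\mu)^2}\,\|w^*\|^2,$$ where the expectation is over the random samples $(x_t,y_t)$ and the random label flips $\theta_t$.
   Context: Let $\mathcal{X}=\{x\in\mathbb{R}^d:\|x\|\le 1\}$ and $\mathcal{Y}=\{\pm1\}$. Let $\mathcal{D}$ be a probability distribution over $\mathcal{X}\times\mathcal{Y}$ for which there exists $w^*\in\mathbb{R}^d$ with $\mathcal{D}(\{(x,y): y\langle w^*,x\rangle<1\})=0$. Fix $\mu\in[0,1/2)$. Let $(x_1,y_1),\dots,(x_N,y_N)$ be i.i.d. samples from $\mathcal{D}$, and let $\theta_1,\dots,\theta_N$ be i.i.d. random variables, independent of the samples, with $\Pr[\theta_t=1]=1-\mu$ and $\Pr[\theta_t=-1]=\mu$; the observed (noisy) label is $\tilde y_t=\theta_t y_t$. The Update-by-Disagreement perceptron starts from fixed initial vectors $w^{(1)}_0,w^{(2)}_0\in\mathbb{R}^d$ and for $t=1,\dots,N$ sets $\tau_t=1$ if $\mathrm{sign}(\langle w^{(1)}_{t-1},x_t\rangle)\neq\mathrm{sign}(\langle w^{(2)}_{t-1},x_t\rangle)$ and $\tau_t=0$ otherwise, and then updates $w^{(i)}_t=w^{(i)}_{t-1}+\tau_t\,\tilde y_t\,x_t$ for $i=1,2$. Here $\mathrm{sign}(z)=+1$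 for $z>0$, $-1$ for $z<0$, and its value at $0$ is some fixed convention. *)

From mathcomp Require Import all_boot all_order all_algebra.
From mathcomp Require Import all_classical all_reals all_analysis.
Set Implicit Arguments. Unset Strict Implicit. Unset Printing Implicit Defensive.
Import Order.TTheory GRing.Theory Num.Theory.
Local Open Scope ring_scope.


Section Perceptron.
Variable R : realType.

Definition dotv (d : nat) (u v : 'rV[R]_d) : R := (\sum_(i < d) u 0 i * v 0 i)%R.
Definition enorm (d : nat) (u : 'rV[R]_d) : R := Num.sqrt (dotv u u).

Definition sgnc (s0 a : R) : R :=
  if (0 < a)%R then 1%R else if (a < 0)%R then (-1)%R else s0.

Definition disagree (s0 : R) (d : nat) (w1 w2 x : 'rV[R]_d) : bool :=
  sgnc s0 (dotv w1 x) != sgnc s0 (dotv w2 x).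

(* Number of updates T made by Update-by-Disagreement on the sequence of
   (sample, theta) pairs s, starting from (w1, w2); X, Y give the
   feature vector and the (clean) label of a sample; the observed label is
   theta * Y z. *)
Fixpoint updates (T : Type) (d : nat) (X : T -> 'rV[R]_d) (Y : T -> R) (s0 : R)
  (w1 w2 : 'rV[R]_d) (s : seq (T * R)) : nat :=
  match s with
  | [::] => 0%N
  | (z, th) :: s' =>
      let t := disagree s0 w1 w2 (X z) in
      let u := if t then (th * Y z) *: X z else 0 in
      (t + updates X Y s0 (w1 + u) (w2 + u) s')%N
  end.

(* Expectation of f over n i.i.d. pairs (z_t, theta_t), z_t ~ D and
   theta_t = 1 w.p. 1-mu, -1 w.p. mu, independent; written as the iterated
   integral over the product distribution (first pair is the head). *)
Fixpoint iid_expect (dm : measure_display) (T : measurableType dm)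
  (D : probability T R) (mu : R) (n : nat) (f : seq (T * R) -> \bar R) : \bar R :=
  match n with
  | 0%N => f [::]
  | n'.+1 => (\int[D]_z
      ((1 - mu)%:E * iid_expect D mu n' (fun s => f ((z, 1%R) :: s))
       + mu%:E * iid_expect D mu n' (fun s => f ((z, (-1)%R) :: s))))%E
  end.

End Perceptron.

From mathcomp Require Import all_boot all_order all_algebra.
From mathcomp Require Import all_classical all_reals all_analysis.
From mathcomp Require Import ring lra.
From mathcomp Require Import measurable_realfun.
Set Implicit Arguments. Unset Strict Implicit. Unset Printing Implicit Defensive.
Import Order.TTheory GRing.Theory Num.Theory.
Local Open Scope ring_scope.

(* Both weight vectors receive the same update, so their difference c stays
   equal to w1_0 - w2_0, and an update happens only when <w1,x> and <w2,x>
   have opposite signs, which forces |<w1 + w2, x>| <= |<c, x>| <= 2K.  The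
   potential
     V(s) = (|w*| sqrt(m^2 + |s|^2) - <w*, s>) / (1 - 2 mu),
     m = |w*| (4 (1 - 2 mu) K + 2) / (1 - 2 mu),
   of s = w1 + w2 is nonnegative and, averaging over the label flip, drops by
   at least 1 at every update: the linear part drops by at least 2 (1 - 2 mu)
   by the margin condition, while concavity of the square root bounds the
   increase of the first part by (1 - 2 mu).  Hence E[T] <= V(w1_0 + w2_0),
   which is at most the stated bound. *)

Section InnerProduct.
Variables (R : realType) (d : nat).
Implicit Types (u v w : 'rV[R]_d) (k : R).

Lemma dotvC u v : dotv u v = dotv v u.
Proof. by apply: eq_bigr => i _; rewrite mulrC. Qed.

Lemma dotvDl u v w : dotv (u + v) w = dotv u w + dotv v w.
Proof. by rewrite /dotv -big_split; apply: eq_bigr => i _; rewrite !mxE mulrDl. Qed.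

Lemma dotvZl k u w : dotv (k *: u) w = k * dotv u w.
Proof. by rewrite /dotv mulr_sumr; apply: eq_bigr => i _; rewrite !mxE mulrA. Qed.

Lemma dotvNl u w : dotv (- u) w = - dotv u w.
Proof. by rewrite -scaleN1r dotvZl mulN1r. Qed.

Lemma dotvBl u v w : dotv (u - v) w = dotv u w - dotv v w.
Proof. by rewrite dotvDl dotvNl. Qed.

Lemma dotvDr u v w : dotv w (u + v) = dotv w u + dotv w v.
Proof. by rewrite dotvC dotvDl !(dotvC w). Qed.

Lemma dotvZr k u w : dotv w (k *: u) = k * dotv w u.
Proof. by rewrite dotvC dotvZl dotvC. Qed.

Lemma dotvBr u v w : dotv w (u - v) = dotv w u - dotv w v.
Proof. by rewrite dotvC dotvBl !(dotvC w). Qed.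

Lemma dotvv_ge0 u : 0 <= dotv u u.
Proof. by apply: sumr_ge0 => i _; rewrite -expr2 sqr_ge0. Qed.

Lemma dotvv_eq0 u v : dotv u u = 0 -> dotv u v = 0.
Proof.
move=> /psumr_eq0P uu0; apply: big1 => i _.
have /eqP : u 0 i * u 0 i = 0 by apply: uu0 => // j _; rewrite -expr2 sqr_ge0.
by rewrite mulf_eq0 orbb => /eqP ->; rewrite mul0r.
Qed.

Lemma dotv_sqr_le u v : dotv u v ^+ 2 <= dotv u u * dotv v v.
Proof.
have [uu0|uu_neq0] := eqVneq (dotv u u) 0.
  by rewrite dotvv_eq0 // uu0 expr0n mul0r.
have uu_gt0 : 0 < dotv u u by rewrite lt_def uu_neq0 dotvv_ge0.
(* expand [0 <= |(u.u) v - (u.v) u|^2] *)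
have := dotvv_ge0 (dotv u u *: v - dotv u v *: u).
rewrite !dotvBl !dotvZl !dotvBr !dotvZr (dotvC v u) => H.
have : 0 <= dotv u u * (dotv u u * dotv v v - dotv u v ^+ 2).
  by move: H; congr (_ <= _); ring.
by rewrite pmulr_rge0 // subr_ge0.
Qed.

Lemma enorm_ge0 u : 0 <= enorm u.
Proof. exact: sqrtr_ge0. Qed.

Lemma enorm_sqr u : enorm u ^+ 2 = dotv u u.
Proof. by rewrite sqr_sqrtr // dotvv_ge0. Qed.

Lemma enormN u : enorm (- u) = enorm u.
Proof. by rewrite /enorm dotvNl dotvC dotvNl opprK. Qed.

Lemma norm_dotv_le u v : `|dotv u v| <= enorm u * enorm v.
Proof.
rewrite -ler_sqr ?nnegrE ?mulr_ge0 ?enorm_ge0 //.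
by rewrite real_normK ?num_real // exprMn !enorm_sqr dotv_sqr_le.
Qed.

Lemma enormD_le u v : enorm (u + v) <= enorm u + enorm v.
Proof.
rewrite -ler_sqr ?nnegrE ?addr_ge0 ?enorm_ge0 //.
rewrite enorm_sqr dotvDl !dotvDr (dotvC v u) sqrrD -!enorm_sqr.
by case/ler_normlP: (norm_dotv_le u v) => _; lra.
Qed.

Lemma enormB_le u v : enorm (u - v) <= enorm u + enorm v.
Proof. by rewrite -(enormN v) enormD_le. Qed.

End InnerProduct.

Section SqrtBounds.
Variable R : realType.

Lemma sqrtr_AMGM (G Z : R) : 0 <= Z -> 2 * G * Num.sqrt Z <= G ^+ 2 + Z.
Proof.
move=> Z_ge0; rewrite -{2}(sqr_sqrtr Z_ge0).
have := sqr_ge0 (Num.sqrt Z - G); nra.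
Qed.

Lemma mean_sqrtr_le (mu G h c : R) : 0 <= mu <= 1 ->
  0 <= G ^+ 2 + h + c -> 0 <= G ^+ 2 + h - c ->
  2 * G * ((1 - mu) * Num.sqrt (G ^+ 2 + h + c) + mu * Num.sqrt (G ^+ 2 + h - c) - G)
  <= h + (1 - 2 * mu) * c.
Proof.
move=> /andP[mu_ge0 mu_le1] /(sqrtr_AMGM G) plus /(sqrtr_AMGM G) minus.
have := ler_wpM2l mu_ge0 minus.
have := ler_wpM2l (_ : 0 <= 1 - mu) plus; rewrite subr_ge0 => /(_ mu_le1); lra.
Qed.

End SqrtBounds.

Lemma sgnc_neq_mul_le0 (R : realType) (s0 p q : R) :
  sgnc s0 p != sgnc s0 q -> p * q <= 0.
Proof.
move=> H; rewrite leNgt; apply/negP => pq; move: H; rewrite /sgnc.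
by case: (ltrgtP 0 p) => hp; case: (ltrgtP 0 q) => hq; rewrite ?eqxx //; nra.
Qed.

Lemma disagree_norm_dotvD (R : realType) (d : nat) (s0 : R) (w1 w2 x : 'rV[R]_d) :
  disagree s0 w1 w2 x -> `|dotv (w1 + w2) x| <= `|dotv (w1 - w2) x|.
Proof.
move=> /sgnc_neq_mul_le0 pq.
rewrite -ler_sqr ?nnegrE // !real_normK ?num_real // dotvDl dotvBl; nra.
Qed.

Lemma enorm_ge1_of_margin (R : realType) (d : nat) (w x : 'rV[R]_d) (y : R) :
  enorm x <= 1 -> y ^+ 2 = 1 -> 1 <= y * dotv w x -> 1 <= enorm w.
Proof.
move=> x_le1 /eqP; rewrite sqr_norm_eq1 => /eqP y_norm margin.
apply: (le_trans margin); apply: (le_trans (ler_norm _)).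
rewrite normrM y_norm mul1r; apply: (le_trans (norm_dotv_le _ _)).
by rewrite ler_piMr ?enorm_ge0.
Qed.

Section Potential.
Variables (R : realType) (d : nat) (wstar : 'rV[R]_d) (mu K : R).

Definition potential_offset : R :=
  enorm wstar * (4 * (1 - 2 * mu) * K + 2) / (1 - 2 * mu).

Definition potential (s : 'rV[R]_d) : R :=
  (enorm wstar * Num.sqrt (potential_offset ^+ 2 + dotv s s) - dotv wstar s)
  / (1 - 2 * mu).

Hypotheses (mu_ge0 : 0 <= mu) (mu_lt_half : mu < 1 / 2).
Hypotheses (wstar_ge1 : 1 <= enorm wstar) (K_ge0 : 0 <= K).

Let a : R := 1 - 2 * mu.
Let W : R := enorm wstar.
Let m : R := potential_offset.

Let a_gt0 : 0 < a. Proof. by move: mu_lt_half; rewrite /a; lra. Qed.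

Let m_gt0 : 0 < m.
Proof.
rewrite /m /potential_offset -/a -/W; apply: divr_gt0 a_gt0.
apply: mulr_gt0; first exact: lt_le_trans ltr01 wstar_ge1.
by have := mulr_ge0 (ltW a_gt0) K_ge0; rewrite -mulrA; lra.
Qed.

Lemma potential_ge0 s : 0 <= potential s.
Proof.
rewrite /potential -/a -/m; apply: divr_ge0 (ltW a_gt0); rewrite subr_ge0.
apply: (le_trans (ler_norm _)); apply: (le_trans (norm_dotv_le _ _)).
apply: ler_wpM2l; first exact: enorm_ge0.
by rewrite /enorm ler_sqrt ?lerDr ?sqr_ge0 // addr_ge0 ?sqr_ge0 ?dotvv_ge0.
Qed.

Lemma sqrt_potential_increase_le (s x : 'rV[R]_d) y :
  enorm x <= 1 -> y ^+ 2 = 1 -> y * dotv s x <= 2 * K ->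
  W * ((1 - mu) * Num.sqrt (m ^+ 2 + dotv (s + (2 * y) *: x) (s + (2 * y) *: x))
       + mu * Num.sqrt (m ^+ 2 + dotv (s - (2 * y) *: x) (s - (2 * y) *: x))
       - Num.sqrt (m ^+ 2 + dotv s s))
  <= a.
Proof.
move=> x_le1 y_sqr sx_le.
set G := Num.sqrt (m ^+ 2 + dotv s s).
have G_sqr : G ^+ 2 = m ^+ 2 + dotv s s by rewrite sqr_sqrtr ?addr_ge0 ?sqr_ge0 ?dotvv_ge0.
have m_le_G : m <= G.
  rewrite -(gtr0_norm m_gt0) -sqrtr_sqr ler_sqrt ?lerDl ?dotvv_ge0 //.
  by rewrite addr_ge0 ?sqr_ge0 ?dotvv_ge0.
have G_gt0 : 0 < G := lt_le_trans m_gt0 m_le_G.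
have sqr_shift k : m ^+ 2 + dotv (s + k *: x) (s + k *: x)
    = G ^+ 2 + k ^+ 2 * dotv x x + 2 * k * dotv s x.
  by rewrite G_sqr dotvDl !dotvDr !dotvZl !dotvZr (dotvC x s); ring.
have sqr_plus : m ^+ 2 + dotv (s + (2 * y) *: x) (s + (2 * y) *: x)
    = G ^+ 2 + 4 * dotv x x + 4 * (y * dotv s x).
  by rewrite sqr_shift exprMn y_sqr; ring.
have sqr_minus : m ^+ 2 + dotv (s - (2 * y) *: x) (s - (2 * y) *: x)
    = G ^+ 2 + 4 * dotv x x - 4 * (y * dotv s x).
  by rewrite -scaleNr sqr_shift sqrrN exprMn y_sqr; ring.
rewrite sqr_plus sqr_minus; set D := (X in W * X).
have GD : G * D <= 4 * a * K + 2.
  have xx_le1 : dotv x x <= 1 by rewrite -enorm_sqr; have := enorm_ge0 x; nra.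
  have mu01 : 0 <= mu <= 1 by rewrite mu_ge0; move: mu_lt_half; lra.
  have := @mean_sqrtr_le _ mu G (4 * dotv x x) (4 * (y * dotv s x)) mu01.
  rewrite -/D -/a -sqr_plus -sqr_minus !addr_ge0 ?sqr_ge0 ?dotvv_ge0 // => /(_ isT isT).
  by have := ler_wpM2l (ltW a_gt0) sx_le; lra.
have : G * (W * D) <= G * a.
  have WGD : W * (G * D) <= W * (4 * a * K + 2) by rewrite ler_wpM2l ?enorm_ge0.
  have aG : a * m <= a * G by rewrite ler_wpM2l // ltW.
  (* this identity is what fixes the offset [m] *)
  have am : a * m = W * (4 * a * K + 2).
    by rewrite /m /potential_offset -/a -/W; field; exact: lt0r_neq0.
  by move: WGD aG; rewrite am; lra.
by rewrite ler_pM2l.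
Qed.

Lemma potential_drift s x y :
  enorm x <= 1 -> y ^+ 2 = 1 -> 1 <= y * dotv wstar x -> y * dotv s x <= 2 * K ->
  1 + (1 - mu) * potential (s + (2 * y) *: x) + mu * potential (s - (2 * y) *: x)
  <= potential s.
Proof.
move=> x_le1 y_sqr margin sx_le.
have := sqrt_potential_increase_le x_le1 y_sqr sx_le.
rewrite /potential -/a -/m -/W [dotv wstar (s + _)]dotvDr [dotv wstar (s - _)]dotvBr !dotvZr.
set s1 := Num.sqrt (m ^+ 2 + dotv (s + (2 * y) *: x) _).
set s2 := Num.sqrt (m ^+ 2 + dotv (s - (2 * y) *: x) _).
set G := Num.sqrt (m ^+ 2 + dotv s s) => increase_le.
have a_le : a <= a * (y * dotv wstar x) by rewrite ler_peMr // ltW.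
rewrite -subr_ge0.
have -> : (W * G - dotv wstar s) / a - (1 + (1 - mu) * ((W * s1 -
    (dotv wstar s + 2 * y * dotv wstar x)) / a) + mu * ((W * s2 -
    (dotv wstar s - 2 * y * dotv wstar x)) / a))
    = (2 * (a * (y * dotv wstar x)) - a - W * ((1 - mu) * s1 + mu * s2 - G)) / a.
  by rewrite /a; field; rewrite -/a lt0r_neq0.
by apply: divr_ge0 (ltW a_gt0); lra.
Qed.

Lemma potential_le s : enorm s <= 2 * K ->
  potential s <= 3 * (4 * K + 1) / (1 - 2 * mu) ^+ 2 * enorm wstar ^+ 2.
Proof.
move=> s_le; rewrite /potential -/a -/m -/W.
have G_le : Num.sqrt (m ^+ 2 + dotv s s) <= m + 2 * K.
  have ms_ge0 : 0 <= m + enorm s by rewrite addr_ge0 ?enorm_ge0 // ltW.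
  apply: le_trans (_ : m + enorm s <= _); last by rewrite lerD2l.
  rewrite -(ger0_norm ms_ge0) -sqrtr_sqr ler_sqrt ?sqr_ge0 // -enorm_sqr sqrrD.
  by have := mulr_ge0 (ltW m_gt0) (enorm_ge0 s); rewrite -mulr_natr; lra.
have A_le : - dotv wstar s <= 2 * K * W.
  apply: le_trans (_ : `|dotv wstar s| <= _); first by rewrite -normrN ler_norm.
  apply: le_trans (norm_dotv_le _ _) _.
  by rewrite mulrC ler_wpM2r ?enorm_ge0.
have W_gt0 : 0 < W := lt_le_trans ltr01 wstar_ge1.
apply: le_trans (_ : (W * (m + 2 * K) + 2 * K * W) / a <= _).
  by rewrite ler_pM2r ?invr_gt0 //; have := ler_wpM2l (ltW W_gt0) G_le; lra.
rewrite /m /potential_offset -/a -/W -subr_ge0.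
have -> : 3 * (4 * K + 1) / a ^+ 2 * W ^+ 2 -
  (W * (W * (4 * a * K + 2) / a + 2 * K) + 2 * K * W) / a
  = (3 * (4 * K + 1) * W ^+ 2 - W ^+ 2 * (4 * a * K + 2) - 4 * a * K * W) / a ^+ 2.
  by field; rewrite lt0r_neq0.
apply: divr_ge0; last exact: sqr_ge0.
have a_le1 : a <= 1 by move: mu_ge0; rewrite /a; lra.
have KW_ge0 : 0 <= K * W by rewrite mulr_ge0 // ltW.
have aKW : a * K * W <= K * W by rewrite -mulrA ler_piMl.
have KW2 : K * W <= K * W ^+ 2 by rewrite expr2 mulrA ler_peMr.
have aKW2 : a * K * W ^+ 2 <= K * W ^+ 2.
  by rewrite -mulrA ler_piMl ?mulr_ge0 ?sqr_ge0 // ltW.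
have W2_ge1 : 1 <= W ^+ 2 := exprn_ege1 2 wstar_ge1.
lra.
Qed.

End Potential.

Section IntegralBound.
Context d (T : measurableType d) (R : realType).
Local Open Scope ereal_scope.
Import HBNNSimple.

(* [f] need not be measurable: the integral of a nonnegative function is the
   supremum of the integrals of the simple functions below it. *)
Lemma ge0_integral_le_ae_cst (mu : {measure set T -> \bar R}) (N : set T)
    (f : T -> \bar R) (c : R) :
  measurable N -> mu N = 0 -> (0 <= c)%R -> (forall x, 0 <= f x) ->
  (forall x, ~ N x -> f x <= c%:E) ->
  \int[mu]_x f x <= c%:E * mu setT.
Proof.
move=> mN N0 c_ge0 f_ge0 f_le.
rewrite ge0_integralTE //=; apply: ge_ereal_sup => _ [h /= h_le <-].
have mh := @measurable_funPT _ _ _ _ h.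
rewrite -integralT_nnsfun (ge0_negligible_integral mN _ _ _ N0) //; last 2 first.
- exact/measurable_EFinP.
- by move=> x _; rewrite lee_fin.
have mTN : measurable (setT `\` N) by exact: measurableD.
apply: le_trans (_ : \int[mu]_(x in setT `\` N) (cst c%:E) x <= _).
  apply: ge0_le_integral => //.
  - by move=> x _; rewrite lee_fin.
  - exact/measurable_EFinP/(measurable_funS _ _ mh).
  - by move=> x [_ Nx]; apply: le_trans (h_le x) (f_le x Nx).
rewrite integral_cst //; apply: lee_wpmul2l; first by rewrite lee_fin.
by apply: le_measure; rewrite ?inE.
Qed.

End IntegralBound.

Lemma measurable_margin_lt1 (R : realType) (dm : measure_display)
    (T : measurableType dm) (d : nat) (X : T -> 'rV[R]_d) (Y : T -> R) (w : 'rV[R]_d) :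
  (forall i : 'I_d, measurable_fun setT (fun z : T => X z 0 i)) ->
  measurable_fun setT Y ->
  measurable [set z : T | Y z * dotv w (X z) < 1]%classic.
Proof.
move=> mX mY.
have mmargin : measurable_fun setT (fun z => Y z * dotv w (X z)).
  apply: measurable_funM => //; apply: measurable_sum => i.
  exact: measurable_funM (measurable_cst _) (mX i).
have := measurable_fun_ltr mmargin (measurable_cst (1 : R)) measurableT.
by move=> /(_ [set true]%classic); rewrite setTI; apply.
Qed.

Section UpdateBound.
Context (R : realType) (dm : measure_display) (T : measurableType dm).
Variable D : probability T R.

Lemma iid_expect_ge0 (mu : R) n (f : seq (T * R) -> \bar R) :
  0 <= mu <= 1 -> (forall s, (0 <= f s)%E) -> (0 <= iid_expect D mu n f)%E.
Proof.
move=> /andP[mu_ge0 mu_le1]; elim: n f => [|n IH] f f_ge0 //=.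
apply: integral_ge0 => z _; apply: adde_ge0; apply: mule_ge0;
  by rewrite ?lee_fin ?subr_ge0 //; apply: IH.
Qed.

Variables (d : nat) (X : T -> 'rV[R]_d) (Y : T -> R) (wstar c : 'rV[R]_d) (mu K s0 : R).
Hypotheses (mu_ge0 : 0 <= mu) (mu_lt_half : mu < 1 / 2).
Hypotheses (wstar_ge1 : 1 <= enorm wstar) (K_ge0 : 0 <= K).
Hypotheses (X_le1 : forall z, enorm (X z) <= 1) (Y_sqr : forall z, Y z ^+ 2 = 1).
Hypothesis c_bound : forall z, `|dotv c (X z)| <= 2 * K.

Local Notation shift w1 w2 z th :=
  (if disagree s0 w1 w2 (X z) then (th * Y z) *: X z else 0).
Local Notation V := (potential wstar mu K).

Lemma potential_update_step z w1 w2 : w1 - w2 = c ->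
  1 <= Y z * dotv wstar (X z) ->
  (disagree s0 w1 w2 (X z))%:R
    + (1 - mu) * V ((w1 + shift w1 w2 z 1) + (w2 + shift w1 w2 z 1))
    + mu * V ((w1 + shift w1 w2 z (-1)) + (w2 + shift w1 w2 z (-1)))
  <= V (w1 + w2).
Proof.
move=> w12 margin; case: ifP => [dis|_]; last first.
  by rewrite !addr0 add0r -mulrDl subrK mul1r.
have sum_shift k : (w1 + k *: X z) + (w2 + k *: X z) = (w1 + w2) + (2 * k) *: X z.
  by rewrite addrACA mulr_natl mulr2n scalerDl.
rewrite !sum_shift mul1r mulN1r mulrN scaleNr.
apply: potential_drift => //.
apply: le_trans (ler_norm _) _.
have /eqP := Y_sqr z; rewrite sqr_norm_eq1 => /eqP Y_norm.
rewrite normrM Y_norm mul1r; apply: le_trans (disagree_norm_dotvD dis) _.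
by rewrite w12.
Qed.

Hypothesis margin_meas : measurable [set z | Y z * dotv wstar (X z) < 1]%classic.
Hypothesis margin_null : D [set z | Y z * dotv wstar (X z) < 1]%classic = 0%E.

(* [e] counts the updates made on the samples already consumed. *)
Lemma iid_expect_updates_le n w1 w2 (e : R) (f : seq (T * R) -> \bar R) :
  w1 - w2 = c -> 0 <= e ->
  (forall s, f s = (e + (updates X Y s0 w1 w2 s)%:R)%:E) ->
  (iid_expect D mu n f <= (e + V (w1 + w2))%:E)%E.
Proof.
have mu_le1 : mu <= 1 by move: mu_lt_half; lra.
have mu01 : 0 <= mu <= 1 by rewrite mu_ge0 mu_le1.
elim: n w1 w2 e f => [|n IH] w1 w2 e f w12 e_ge0 f_eq /=.
  by rewrite f_eq /= lee_fin addr0 lerDl potential_ge0.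
have Ve_ge0 : 0 <= e + V (w1 + w2) by rewrite addr_ge0 ?potential_ge0.
apply: le_trans (ge0_integral_le_ae_cst margin_meas margin_null Ve_ge0 _ _) _.
- move=> z; apply: adde_ge0; apply: mule_ge0; rewrite ?lee_fin ?subr_ge0 //;
    by apply: iid_expect_ge0 => // s; rewrite f_eq lee_fin addr_ge0.
- move=> z /negP; rewrite -leNgt => margin.
  set t := disagree s0 w1 w2 (X z).
  have shift_diff (u : 'rV[R]_d) : (w1 + u) - (w2 + u) = c.
    by rewrite opprD addrACA subrr addr0.
  have et_ge0 : 0 <= e + t%:R by rewrite addr_ge0.
  have IH1 := IH _ _ _ (fun s => f ((z, 1) :: s)) (shift_diff (shift w1 w2 z 1)) et_ge0
    (fun s => ltac:(by rewrite /= f_eq /= natrD addrA)).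
  have IH2 := IH _ _ _ (fun s => f ((z, -1) :: s)) (shift_diff (shift w1 w2 z (-1))) et_ge0
    (fun s => ltac:(by rewrite /= f_eq /= natrD addrA)).
  apply: le_trans (_ : ((1 - mu)%:E * (e + t%:R + V _)%:E
                        + mu%:E * (e + t%:R + V _)%:E <= _)%E).
    by apply: leeD; apply: lee_wpmul2l; rewrite ?lee_fin ?subr_ge0 //;
      solve [exact: IH1 | exact: IH2].
  rewrite -!EFinM -EFinD lee_fin.
  by have := potential_update_step w12 margin; rewrite -/t; lra.
- by rewrite -[leRHS]mule1; apply: lee_wpmul2l; rewrite ?lee_fin // probability_le1.
Qed.

End UpdateBound.

Theorem theorem1 (R : realType) (d : nat) (dm : measure_display)
  (T : measurableType dm) (D : probability T R)
  (X : T -> 'rV[R]_d) (Y : T -> R) (wstar : 'rV[R]_d) (mu : R)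
  (w10 w20 : 'rV[R]_d) (s0 : R) (N : nat) :
  (forall i : 'I_d, measurable_fun setT (fun z : T => X z 0 i)) ->
  measurable_fun setT Y ->
  (forall z : T, enorm (X z) <= 1) ->
  (forall z : T, Y z = 1 \/ Y z = -1) ->
  D [set z : T | Y z * dotv wstar (X z) < 1]%classic = 0%E ->
  0 <= mu -> mu < 1 / 2 ->
  let K := Num.max (enorm w10) (enorm w20) in
  (iid_expect D mu N (fun s => ((updates X Y s0 w10 w20 s)%:R)%:E)
   <= ((3 * (4 * K + 1)) / (1 - 2 * mu) ^+ 2 * enorm wstar ^+ 2)%:E)%E.
Proof.
move=> mX mY X_le1 Y_pm1 margin_null mu_ge0 mu_lt_half; cbv zeta.
set K := Num.max (enorm w10) (enorm w20).
have Y_sqr z : Y z ^+ 2 = 1 by case: (Y_pm1 z) => ->; rewrite ?sqrrN expr1n.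
have [z /negP] : exists z, ~ (Y z * dotv wstar (X z) < 1).
  apply: contrapT => no_margin.
  have low_all : [set z | Y z * dotv wstar (X z) < 1]%classic = setT.
    by apply/seteqP; split => // z' _; apply: contrapT => h; apply: no_margin; exists z'.
  by move: margin_null; rewrite low_all probability_setT => /eqP; rewrite onee_eq0.
rewrite -leNgt => margin_z.
have wstar_ge1 := enorm_ge1_of_margin (X_le1 z) (Y_sqr z) margin_z.
have w1_le : enorm w10 <= K by rewrite le_max lexx.
have w2_le : enorm w20 <= K by rewrite le_max lexx orbT.
have K_ge0 : 0 <= K := le_trans (enorm_ge0 w10) w1_le.
have c_bound z' : `|dotv (w10 - w20) (X z')| <= 2 * K.
  apply: le_trans (norm_dotv_le _ _) (le_trans (ler_wpM2l (enorm_ge0 _) (X_le1 z')) _).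
  by rewrite mulr1; apply: le_trans (enormB_le _ _) _; lra.
apply: le_trans (iid_expect_updates_le mu_ge0 mu_lt_half wstar_ge1 K_ge0 X_le1 Y_sqr
  c_bound (measurable_margin_lt1 wstar mX mY) margin_null N erefl (lexx 0) _) _.
  by move=> s; rewrite add0r.
rewrite add0r lee_fin potential_le //.
by apply: le_trans (enormD_le _ _) _; lra.
Qed.
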